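(* Let $\Sigma$ be an alphabet. Then $\mathrm{RevL}(\mathbb{B},\Sigma)\subseteq\mathrm{RevL}(\mathbb{F}_2,\Sigma)$.
   Context: $\mathbb{F}_2$ is the two-element field and $\mathbb{B}=(\{0,1\},\lor,\land,0,1)$ the Boolean semiring. For a semiring $S$ and finite nonempty alphabet $\Sigma$, a series is a map $r\colon\Sigma^*\to S$ with value $(r,w)$ and support $\mathrm{supp}(r)=\{w\mid(r,w)\neq0\}$. A weighted automaton over $S$ and $\Sigma$ is $\mathcal{A}=(Q,\sigma,\iota,\tau)$ with $Q$ finite, $\sigma\colon Q\times\Sigma\times Q\to S$, $\iota,\tau\colon Q\to S$; a run on $w=a_1\cdots a_t$ is $q_0a_1q_1\cdots a_tq_t$ with all $\sigma(q_{k-1},a_k,q_k)\neq0$, of weight $\iota(q_0)\sigma(q_0,a_1,q_1)\cdots\sigma(q_{t-1},a_t,q_t)\tau(q_t)$, and $(\|\mathcal{A}\|,w)$ is the sum of weights of all runs on $w$. $\mathcal{A}$ is reversible if for all $p,p',q,q'\in Q$, $a\in\Sigma$: $\sigma(p,a,q)\neq0\neq\sigma(p,a,q')$ implies $q=q'$, and $\sigma(p,a,q)\neq0\neq\sigma(p',a,q)$ implies $p=p'$. $\mathrm{RevL}(S,\Sigma)$ is the set of supports of series realised by reversible weighted automata over $S$ and $\Sigma$. Thus $\mathrm{RevL}(\mathbb{B},\Sigma)$ is the set of languages recognised by reversible finite automata in the sense of Pin: nondeterministic finite automata whose transition relation is both deterministic and codeterministic, with arbitrary sets of initial and final states. *)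

From HB Require Import structures.
From mathcomp Require Import all_boot all_algebra.
Set Implicit Arguments. Unset Strict Implicit. Unset Printing Implicit Defensive.
Import GRing.Theory.
Local Open Scope ring_scope.

(* The Boolean semiring B = ({0,1}, or, and, 0, 1), on a copy of bool
   (MathComp's canonical ring structure on bool is F_2 (xor), so we use
   an alias). *)
Definition boolsr := bool.
Definition bsr_add (a b : boolsr) : boolsr := a || b.
Definition bsr_mul (a b : boolsr) : boolsr := a && b.
HB.instance Definition _ := Choice.on boolsr.
Fact bsr_addA : associative bsr_add. Proof. by case; case; case. Qed.
Fact bsr_addC : commutative bsr_add. Proof. by case; case. Qed.
Fact bsr_add0 : left_id (false : boolsr) bsr_add. Proof. by case. Qed.
HB.instance Definition _ := GRing.isNmodule.Build boolsr bsr_addA bsr_addC bsr_add0.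
Fact bsr_mulA : associative bsr_mul. Proof. by case; case; case. Qed.
Fact bsr_mul1l : left_id (true : boolsr) bsr_mul. Proof. by case. Qed.
Fact bsr_mul1r : right_id (true : boolsr) bsr_mul. Proof. by case. Qed.
Fact bsr_mulDl : left_distributive bsr_mul bsr_add. Proof. by case; case; case. Qed.
Fact bsr_mulDr : right_distributive bsr_mul bsr_add. Proof. by case; case; case. Qed.
Fact bsr_mul0l : left_zero (false : boolsr) bsr_mul. Proof. by case. Qed.
Fact bsr_mul0r : right_zero (false : boolsr) bsr_mul. Proof. by case. Qed.
Fact bsr_oner_neq0 : (true : boolsr) != false. Proof. by []. Qed.
HB.instance Definition _ := GRing.Nmodule_isNzSemiRing.Build boolsr
  bsr_mulA bsr_mul1l bsr_mul1r bsr_mulDl bsr_mulDr bsr_mul0l bsr_mul0r bsr_oner_neq0.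

Record wautomaton (S : pzSemiRingType) (Sigma Q : finType) := WAutomaton {
  wa_sigma : Q -> Sigma -> Q -> S;
  wa_iota  : Q -> S;
  wa_tau   : Q -> S }.

(* Weight of the state sequence q_0 a_1 q_1 ... a_t q_t, where the run is
   given by the start state q0 and the list of states qs = [q_1; ...; q_t]
   (same length as w). Sequences that are not runs have weight 0 automatically. *)
Fixpoint path_weight (S : pzSemiRingType) (Sigma Q : finType)
    (sg : Q -> Sigma -> Q -> S) (tau : Q -> S)
    (p : Q) (w : seq Sigma) (qs : seq Q) : S :=
  match w, qs with
  | [::], [::] => tau p
  | a :: w', q :: qs' => sg p a q * path_weight sg tau q w' qs'
  | _, _ => 0
  end.

Definition behaviour (S : pzSemiRingType) (Sigma Q : finType)
    (A : wautomaton S Sigma Q) (w : seq Sigma) : S :=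
  \sum_(q0 : Q) \sum_(qs : (size w).-tuple Q)
     wa_iota A q0 * path_weight (@wa_sigma _ _ _ A) (@wa_tau _ _ _ A) q0 w qs.

Definition reversible (S : pzSemiRingType) (Sigma Q : finType)
    (A : wautomaton S Sigma Q) : Prop :=
  (forall (p q q' : Q) (a : Sigma),
      wa_sigma A p a q != 0 -> wa_sigma A p a q' != 0 -> q = q') /\
  (forall (p p' q : Q) (a : Sigma),
      wa_sigma A p a q != 0 -> wa_sigma A p' a q != 0 -> p = p').

Definition support_lang (S : pzSemiRingType) (Sigma Q : finType)
    (A : wautomaton S Sigma Q) : seq Sigma -> Prop :=
  fun w => behaviour A w != 0.

Definition RevL (S : pzSemiRingType) (Sigma : finType) (L : seq Sigma -> Prop) : Prop :=
  exists (n : nat) (A : wautomaton S Sigma 'I_n),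
    reversible A /\ forall w, L w <-> support_lang A w.

From mathcomp Require Import all_boot all_algebra.
Set Implicit Arguments. Unset Strict Implicit. Unset Printing Implicit Defensive.
Import GRing.Theory.
Local Open Scope ring_scope.

(* For a reversible Boolean automaton A, let G(w) be the set of states from
   which w is accepted. A word w is in the support iff I :&: G(w) is nonempty,
   I the set of initial states. Over F_2 we count instead the nonempty subsets
   of I :&: G(w), of which there are 2^k - 1, an odd number iff k > 0. They are
   counted by the subset automaton: its states are sets X of states, with an
   a-transition from X to a(X) exactly when a is defined on all of X. Since A
   is deterministic, X accepts w iff X \subset G(w); since A is codeterministic,
   a(X) determines X, so the subset automaton is again reversible. *)

Lemma big_tuple_cons (R : Type) (idx : R) (op : Monoid.com_law idx)
    (T : finType) (n : nat) (F : n.+1.-tuple T -> R) :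
  \big[op/idx]_(t : n.+1.-tuple T) F t =
  \big[op/idx]_(x : T) \big[op/idx]_(t : n.-tuple T) F [tuple of x :: t].
Proof.
rewrite pair_big (reindex (fun xt : T * n.-tuple T => [tuple of xt.1 :: xt.2])) //=.
exists (fun t : n.+1.-tuple T => (thead t, [tuple of behead t])).
  by move=> [x t] _; rewrite /= theadE; congr pair; apply: val_inj.
by move=> t _; rewrite [RHS]tuple_eta.
Qed.

Section StateBehaviour.
Variables (S : pzSemiRingType) (Sigma : finType).

Fixpoint state_behaviour (Q : finType) (A : wautomaton S Sigma Q) (p : Q)
    (w : seq Sigma) : S :=
  if w is a :: w' then \sum_q wa_sigma A p a q * state_behaviour A q w'
  else wa_tau A p.

Lemma sum_path_weight (Q : finType) (A : wautomaton S Sigma Q) (p : Q) (w : seq Sigma) :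
  \sum_(qs : (size w).-tuple Q) path_weight (wa_sigma A) (wa_tau A) p w qs
  = state_behaviour A p w.
Proof.
elim: w p => [|a w IHw] p /=.
  by rewrite (big_pred1 [tuple]) // => t; apply/esym/eqP/tuple0.
by rewrite big_tuple_cons; apply: eq_bigr => q _; rewrite -IHw mulr_sumr.
Qed.

Lemma behaviourE (Q : finType) (A : wautomaton S Sigma Q) (w : seq Sigma) :
  behaviour A w = \sum_q wa_iota A q * state_behaviour A q w.
Proof. by apply: eq_bigr => q _; rewrite -sum_path_weight mulr_sumr. Qed.

Variables (Q : finType) (A : wautomaton S Sigma Q).

Definition relabel (Q' : finType) (f : Q' -> Q) : wautomaton S Sigma Q' :=
  WAutomaton (fun p a q => wa_sigma A (f p) a (f q))
             (fun p => wa_iota A (f p)) (fun p => wa_tau A (f p)).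

Variables (Q' : finType) (f : Q' -> Q).

Lemma reversible_relabel :
  injective f -> reversible A -> reversible (relabel f).
Proof.
move=> f_inj [A_det A_codet]; split=> /= p q q' a pq pq'; apply: f_inj.
  exact: A_det pq pq'.
exact: A_codet pq pq'.
Qed.

Hypothesis f_bij : bijective f.

Lemma state_behaviour_relabel (p : Q') (w : seq Sigma) :
  state_behaviour (relabel f) p w = state_behaviour A (f p) w.
Proof.
elim: w p => [|a w IHw] p //=; rewrite (reindex f) /=; last exact: onW_bij.
by apply: eq_bigr => q _; rewrite IHw.
Qed.

Lemma behaviour_relabel (w : seq Sigma) : behaviour (relabel f) w = behaviour A w.
Proof.
rewrite !behaviourE [RHS](reindex f) /=; last exact: onW_bij.
by apply: eq_bigr => q _; rewrite state_behaviour_relabel.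
Qed.

End StateBehaviour.

Lemma RevL_finType (S : pzSemiRingType) (Sigma Q : finType)
    (A : wautomaton S Sigma Q) (L : seq Sigma -> Prop) :
  reversible A -> (forall w, L w <-> support_lang A w) -> RevL S L.
Proof.
move=> A_rev LA; exists #|Q|, (relabel A (@enum_val Q Q)); split.
  exact/reversible_relabel/A_rev/enum_val_inj.
by move=> w; rewrite /support_lang behaviour_relabel //; apply: enum_val_bij.
Qed.

Lemma boolsr_neq0 (b : boolsr) : (b != 0) = b. Proof. by case: b. Qed.

Lemma boolsr_sumE (I : finType) (F : I -> boolsr) : \sum_i F i = [exists i, F i].
Proof.
case: existsP => [[i Fi] | noF]; first by rewrite (bigD1 i) //= Fi.
by rewrite big1 // => i _; apply/negbTE/negP => Fi; apply: noF; exists i.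
Qed.

Lemma natr_bool_eq0 (R : nzSemiRingType) (b : bool) : ((b : nat)%:R == 0 :> R) = ~~ b.
Proof. by case: b; rewrite ?oner_eq0 ?eqxx. Qed.

Lemma natr_boolM (R : pzSemiRingType) (b c : bool) :
  (b : nat)%:R * (c : nat)%:R = (b && c : nat)%:R :> R.
Proof. by case: b; case: c; rewrite ?mulr1 ?mulr0. Qed.

Lemma sum_natr_bool (R : pzSemiRingType) (I : finType) (P : pred I) :
  \sum_i (P i : nat)%:R = #|P|%:R :> R.
Proof.
by rewrite -sumr_const [RHS]big_mkcond; apply: eq_bigr => i _; rewrite unfold_in; case: (P i).
Qed.

Section SubsetAutomaton.
Variables (R : nzSemiRingType) (Sigma Q : finType) (A : wautomaton boolsr Sigma Q).
Hypothesis A_rev : reversible A.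

Lemma step_det (p q q' : Q) (a : Sigma) :
  wa_sigma A p a q -> wa_sigma A p a q' -> q = q'.
Proof. by case: A_rev => A_det _ pq pq'; apply: (A_det p q q' a); rewrite boolsr_neq0. Qed.

Lemma step_codet (p p' q : Q) (a : Sigma) :
  wa_sigma A p a q -> wa_sigma A p' a q -> p = p'.
Proof. by case: A_rev => _ A_codet pq p'q; apply: (A_codet p p' q a); rewrite boolsr_neq0. Qed.

Definition image_set (a : Sigma) (X : {set Q}) : {set Q} :=
  [set y | [exists x in X, wa_sigma A x a y]].

Definition total_on (a : Sigma) (X : {set Q}) : bool :=
  [forall x in X, exists y, wa_sigma A x a y].

Definition initial_set : {set Q} := [set q | wa_iota A q].

Definition accept_set (w : seq Sigma) : {set Q} :=
  [set q | (state_behaviour A q w : bool)].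

Definition subset_automaton : wautomaton R Sigma {set Q} :=
  WAutomaton (fun X a Y => (total_on a X && (Y == image_set a X) : nat)%:R)
             (fun X => ((X != set0) && (X \subset initial_set) : nat)%:R)
             (fun X => (X \subset [set q | wa_tau A q] : nat)%:R).

Lemma total_image_set_inj (a : Sigma) (X X' : {set Q}) :
  total_on a X -> total_on a X' -> image_set a X = image_set a X' -> X = X'.
Proof.
have sub Y Y' : total_on a Y -> image_set a Y = image_set a Y' -> Y \subset Y'.
  move=> /forall_inP totY eqY; apply/subsetP => x xY.
  have [y xy] := existsP (totY x xY).
  have : y \in image_set a Y' by rewrite -eqY inE; apply/exists_inP; exists x.
  by rewrite inE => /exists_inP[x' x'Y' x'y]; rewrite (step_codet xy x'y).
by move=> totX totX' eqX; apply/eqP; rewrite eqEsubset !sub.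
Qed.

Lemma subset_automaton_reversible : reversible subset_automaton.
Proof.
split=> /= X Y Y' a; rewrite !natr_bool_eq0 !negbK.
  by move=> /andP[_ /eqP->] /andP[_ /eqP->].
by move=> /andP[totX /eqP->] /andP[totY /eqP eqXY]; apply: total_image_set_inj eqXY.
Qed.

Lemma accept_set_cons (a : Sigma) (w : seq Sigma) (q : Q) :
  (q \in accept_set (a :: w)) = [exists y, wa_sigma A q a y && (y \in accept_set w)].
Proof. by rewrite inE /= boolsr_sumE; apply: eq_existsb => y; rewrite inE. Qed.

Lemma subset_accept_set_cons (a : Sigma) (w : seq Sigma) (X : {set Q}) :
  (X \subset accept_set (a :: w)) =
  total_on a X && (image_set a X \subset accept_set w).
Proof.
apply/subsetP/andP => [acc | [/forall_inP totX /subsetP imX] x xX].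
  split.
    apply/forall_inP => x /acc; rewrite accept_set_cons.
    by case/existsP=> y /andP[xy _]; apply/existsP; exists y.
  apply/subsetP => y; rewrite inE => /exists_inP[x xX xy].
  have := acc x xX; rewrite accept_set_cons => /existsP[y' /andP[xy' y'w]].
  by rewrite (step_det xy xy').
have [y xy] := existsP (totX x xX).
rewrite accept_set_cons; apply/existsP; exists y; rewrite xy imX // inE.
by apply/exists_inP; exists x.
Qed.

Lemma state_behaviour_subset_automaton (X : {set Q}) (w : seq Sigma) :
  state_behaviour subset_automaton X w = (X \subset accept_set w : nat)%:R.
Proof.
elim: w X => [|a w IHw] X /=.
  by congr (_ %:R); congr nat_of_bool; apply: eq_subset => q; rewrite !inE.
rewrite subset_accept_set_cons (bigD1 (image_set a X)) //= big1 ?addr0.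
  by rewrite IHw eqxx andbT natr_boolM.
by move=> Y /negbTE YX; rewrite YX andbF mul0r.
Qed.

Lemma behaviour_subset_automaton (w : seq Sigma) :
  behaviour subset_automaton w = (2 ^ #|initial_set :&: accept_set w| - 1)%N%:R.
Proof.
rewrite behaviourE.
under eq_bigr => X _ do rewrite state_behaviour_subset_automaton /= natr_boolM.
rewrite sum_natr_bool -card_powerset (cardsD1 set0) inE sub0set add1n subn1 /=.
by congr (_ %:R); apply: eq_card => X; rewrite !inE subsetI andbA.
Qed.

Lemma behaviour_boolsr (w : seq Sigma) :
  (behaviour A w : bool) = (initial_set :&: accept_set w != set0).
Proof.
rewrite behaviourE boolsr_sumE.
by apply/existsP/set0Pn => -[q qIw]; exists q; rewrite !inE in qIw *.
Qed.

End SubsetAutomaton.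

Lemma F2_pow2_subn1_eq0 (k : nat) : ((2 ^ k - 1)%N%:R == 0 :> 'F_2) = (k == 0)%N.
Proof.
rewrite -(Fp_nat_mod (p := 2)) // modn2.
by case: k => //= k; rewrite oddB ?expn_gt0 // oddX.
Qed.

Local Close Scope ring_scope.
Theorem lemma1 (Sigma : finType) (Sigma_nonempty : 0 < #|Sigma|)
    (L : seq Sigma -> Prop) :
  RevL boolsr L -> RevL 'F_2 L.
Proof.
move=> [n [A [A_rev LA]]].
apply: (RevL_finType (subset_automaton_reversible 'F_2 A_rev)) => w.
apply: iff_trans (LA w) _.
rewrite /support_lang boolsr_neq0 behaviour_boolsr (behaviour_subset_automaton _ A_rev).
by rewrite F2_pow2_subn1_eq0 -lt0n card_gt0.
Qed.
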